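(* If $\gamma<1$, then for all $k\ge0$, $$\|\mathbf H^{k+1}-\mathbf W^\infty\mathbf H^{k+1}\|_F\le(1-\gamma(1-\sigma))\|\mathbf H^k-\mathbf W^\infty\mathbf H^k\|_F+4\gamma\|\mathbf E^k\|_F+2\gamma(1-\delta)\|\mathbf H^k-\tilde{\mathbf H}^k\|_F+L_2\|\mathbf x^{k+1}-\mathbf x^k\|.$$
   Context: $W\in\mathbb{R}^{n\times n}$ is entrywise nonnegative, symmetric, $W1_n=1_n$, with $w_{ij}=0$ iff $j$ is neither $i$ nor a neighbor of $i$ in an undirected connected graph; $\sigma=\|W-\frac1n1_n1_n^T\|$. Each $f_i:\mathbb{R}^d\to\mathbb{R}$ is $C^2$ with $L_1$-Lipschitz gradient and $L_2$-Lipschitz Hessian. $\mathcal Q:\mathbb{R}^{d\times d}\to\mathbb{R}^{d\times d}$ is deterministic with $\|\mathcal Q(A)-A\|_F\le(1-\delta)\|A\|_F$, $\delta\in(0,1]$, applied blockwise to $nd\times d$ matrices. Notation: $\mathbf x=[x_1;\dots;x_n]\in\mathbb{R}^{nd}$; $\mathbf W=W\otimes I_d$, $\mathbf W^\infty=\frac1n1_n1_n^T\otimes I_d$; $\nabla^2f(\mathbf x)=[\nabla^2f_1(x_1);\dots;\nabla^2f_n(x_n)]\in\mathbb{R}^{nd\times d}$. With $\gamma>0$, arbitrary points $\mathbf x^k\in\mathbb{R}^{nd}$, and arbitrary $\mathbf E^0,\tilde{\mathbf H}^0$, $H_i^0=\nabla^2f_i(x_i^0)$, the sequences satisfy for $k\ge0$: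 $\mathbf E^{k+1}=\mathbf E^k+\mathbf H^k-\tilde{\mathbf H}^k-\mathcal Q(\mathbf E^k+\mathbf H^k-\tilde{\mathbf H}^k)$; $\tilde{\mathbf H}^{k+1}=\tilde{\mathbf H}^k+\mathcal Q(\mathbf H^k-\tilde{\mathbf H}^k)$; $\hat{\mathbf H}^k=\tilde{\mathbf H}^k+\mathcal Q(\mathbf E^k+\mathbf H^k-\tilde{\mathbf H}^k)$; $\mathbf H^{k+1}=\mathbf H^k-\gamma(I_{nd}-\mathbf W)\hat{\mathbf H}^k+\nabla^2f(\mathbf x^{k+1})-\nabla^2f(\mathbf x^k)$. *)

From HB Require Import structures.
From mathcomp Require Import all_boot all_order all_algebra.
From mathcomp Require Import all_classical all_reals all_analysis.
Set Implicit Arguments. Unset Strict Implicit. Unset Printing Implicit Defensive.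
Import Order.TTheory GRing.Theory Num.Theory.
Import numFieldNormedType.Exports.
Local Open Scope classical_set_scope.
Local Open Scope ring_scope.

Section Defs.
Variable R : realType.

Definition frob (p q : nat) (A : 'M[R]_(p, q)) : R :=
  Num.sqrt (\sum_(i < p) \sum_(j < q) A i j ^+ 2).

(* A stacked object [X_1; ...; X_n] (an np x q matrix) is represented as the
   family of its n blocks; its Frobenius norm: *)
Definition stnorm (n p q : nat) (X : 'I_n -> 'M[R]_(p, q)) : R :=
  Num.sqrt (\sum_(i < n) frob (X i) ^+ 2).

(* (W ⊗ I) X, block i *)
Definition mix (n p q : nat) (W : 'M[R]_n) (X : 'I_n -> 'M[R]_(p, q)) :
  'I_n -> 'M[R]_(p, q) := fun i => \sum_(j < n) W i j *: X j.

(* W^oo X = (1/n 1 1^T ⊗ I) X, block i *)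
Definition avg (n p q : nat) (X : 'I_n -> 'M[R]_(p, q)) :
  'I_n -> 'M[R]_(p, q) := fun _ => n%:R^-1 *: \sum_(j < n) X j.

Definition opnorm (m p : nat) (A : 'M[R]_(m, p)) : R :=
  sup [set frob (A *m v) | v in [set v : 'cV[R]_p | frob v <= 1]].

Definition ebasis (d : nat) (a : 'I_d) : 'rV[R]_d := delta_mx 0 a.

Definition partial (d : nat) (f : 'rV[R]_d -> R) (a : 'I_d) : 'rV[R]_d -> R :=
  fun x => derive f x (ebasis a).

Definition grad (d : nat) (f : 'rV[R]_d -> R) (x : 'rV[R]_d) : 'rV[R]_d :=
  \row_a partial f a x.

Definition hess (d : nat) (f : 'rV[R]_d -> R) (x : 'rV[R]_d) : 'M[R]_d :=
  \matrix_(a, b) partial (partial f b) a x.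

Definition isC2 (d : nat) (f : 'rV[R]_d -> R) : Prop :=
  forall a b : 'I_d,
    (forall x, derivable f x (ebasis b)) /\
    (forall x, derivable (partial f b) x (ebasis a)) /\
    continuous (partial (partial f b) a).

End Defs.

From HB Require Import structures.
From mathcomp Require Import all_boot all_order all_algebra.
From mathcomp Require Import all_classical all_reals all_analysis.
From mathcomp Require Import ring lra.
Import Order.TTheory GRing.Theory Num.Theory.
Import numFieldNormedType.Exports.
Set Implicit Arguments. Unset Strict Implicit. Unset Printing Implicit Defensive.
Local Open Scope ring_scope.

(* Write Hhat^k = H^k + Z and D = hess f(x^{k+1}) - hess f(x^k).  As W is doubly
   stochastic, the gossip step preserves averages, so with Y = H^k - W^oo H^k
     H^{k+1} - W^oo H^{k+1} = (1 - gamma) Y + gamma W Y - gamma (Z - W Z) + (D - W^oo D).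
   Since Y has zero average, W Y = (W - W^oo) Y has norm at most sigma |Y|; W and
   I - W^oo do not increase the Frobenius norm; Z = E^k + (Q A - A) with
   A = E^k + H^k - Ht^k, so the compressor gives |Z| <= 2 |E^k| + (1 - delta) |H^k - Ht^k|;
   and the Hessians are L2-Lipschitz. *)

Lemma sqrtr_le (R : rcfType) (s a : R) : 0 <= a -> s <= a ^+ 2 -> Num.sqrt s <= a.
Proof. by move=> a0 /ler_wsqrtr; rewrite sqrtr_sqr ger0_norm. Qed.

Section EuclideanNorm.
Variables (R : realType) (T : finType).
Implicit Types u v : T -> R.

Definition sqsum u := \sum_t u t ^+ 2.
Definition l2norm u := Num.sqrt (sqsum u).

Lemma sqsum_ge0 u : 0 <= sqsum u.
Proof. by apply: sumr_ge0 => t _; exact: sqr_ge0. Qed.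

Lemma sqsum_eq0 u : sqsum u = 0 -> forall t, u t = 0.
Proof.
move=> u0 t; apply/eqP; rewrite -sqrf_eq0; apply/eqP.
by apply: (psumr_eq0P _ u0) => // s _; exact: sqr_ge0.
Qed.

Lemma l2norm_ge0 u : 0 <= l2norm u.
Proof. exact: sqrtr_ge0. Qed.

Lemma sqr_l2norm u : l2norm u ^+ 2 = sqsum u.
Proof. by rewrite sqr_sqrtr // sqsum_ge0. Qed.

Lemma eq_sqsum u v : u =1 v -> sqsum u = sqsum v.
Proof. by move=> uv; apply: eq_bigr => t _; rewrite uv. Qed.

Lemma eq_l2norm u v : u =1 v -> l2norm u = l2norm v.
Proof. by move=> /eq_sqsum uv; rewrite /l2norm uv. Qed.

Lemma cauchy_schwarz u v : (\sum_t u t * v t) ^+ 2 <= sqsum u * sqsum v.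
Proof.
set s := \sum_t _; set a := sqsum u; set b := sqsum v.
have [b0|b_neq0] := eqVneq b 0.
  have v0 := sqsum_eq0 b0.
  by rewrite b0 mulr0 /s big1 ?expr0n // => t _; rewrite v0 mulr0.
have b_gt0 : 0 < b by rewrite lt_def b_neq0 sqsum_ge0.
have expand : \sum_t (b * u t - s * v t) ^+ 2 = b * (a * b - s ^+ 2).
  rewrite (eq_bigr (fun t => b ^+ 2 * u t ^+ 2 + (- (2 * b * s)) * (u t * v t)
                             + s ^+ 2 * v t ^+ 2)) => [|t _]; last by ring.
  rewrite !big_split /= -!mulr_sumr -/s -/(sqsum u) -/(sqsum v) -/a -/b; ring.
have : 0 <= \sum_t (b * u t - s * v t) ^+ 2 by apply: sumr_ge0 => t _; exact: sqr_ge0.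
by rewrite expand pmulr_rge0 // subr_ge0 mulrC.
Qed.

Lemma l2normD u v : l2norm (fun t => u t + v t) <= l2norm u + l2norm v.
Proof.
apply: sqrtr_le; first by rewrite addr_ge0 ?l2norm_ge0.
have uv_le : \sum_t u t * v t <= l2norm u * l2norm v.
  apply: le_trans (ler_norm _) _; rewrite -sqrtr_sqr -sqrtrM ?sqsum_ge0 //.
  exact/ler_wsqrtr/cauchy_schwarz.
rewrite sqrrD !sqr_l2norm /sqsum.
rewrite (eq_bigr (fun t => u t ^+ 2 + (u t * v t) *+ 2 + v t ^+ 2)) => [|t _].
  by rewrite !big_split /= -mulr2n lerD2r lerD2l lerMn2r.
exact: sqrrD.
Qed.

Lemma l2normZ c u : l2norm (fun t => c * u t) = `|c| * l2norm u.
Proof.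
rewrite /l2norm /sqsum (eq_bigr (fun t => c ^+ 2 * u t ^+ 2)) => [|t _].
  by rewrite -mulr_sumr sqrtrM ?sqr_ge0 // sqrtr_sqr.
exact: exprMn.
Qed.

Lemma l2norm_le_sqsum c u v : 0 <= c -> sqsum u <= c ^+ 2 * sqsum v ->
  l2norm u <= c * l2norm v.
Proof.
by move=> c0 uv; apply: sqrtr_le; rewrite ?mulr_ge0 ?l2norm_ge0 // exprMn sqr_l2norm.
Qed.

Lemma l2norm_le_pointwise c u v : (forall t, 0 <= u t) -> (forall t, 0 <= v t) ->
  (forall t, u t <= c * v t) -> l2norm u <= c * l2norm v.
Proof.
move=> u0 v0 uv; have [c0|c_lt0] := lerP 0 c.
  apply: l2norm_le_sqsum => //; rewrite /sqsum mulr_sumr; apply: ler_sum => t _.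
  by rewrite -exprMn ler_pXn2r // ?nnegrE ?mulr_ge0.
have v_eq0 t : v t = 0.
  by apply/le_anti; rewrite v0 andbT -(nmulr_rge0 _ c_lt0) (le_trans (u0 t)).
have u_eq0 t : u t = 0.
  by apply/le_anti; rewrite u0 andbT (le_trans (uv t)) // v_eq0 mulr0.
rewrite (eq_l2norm u_eq0) (eq_l2norm v_eq0) /l2norm /sqsum big1 ?sqrtr0 ?mulr0 //.
by move=> t _; rewrite expr0n.
Qed.

End EuclideanNorm.

Section StackedNorm.
Variables (R : realType) (n p q : nat).
Implicit Types (A : 'M[R]_(p, q)) (X Y : 'I_n -> 'M[R]_(p, q)).

Lemma frob_l2norm A : frob A = l2norm (fun t : 'I_p * 'I_q => A t.1 t.2).
Proof. by rewrite /frob /l2norm /sqsum (pair_bigA _ (fun a b => A a b ^+ 2)). Qed.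

Lemma frob_ge0 A : 0 <= frob A.
Proof. exact: sqrtr_ge0. Qed.

Lemma sqr_frob A : frob A ^+ 2 = \sum_a \sum_b A a b ^+ 2.
Proof. by rewrite frob_l2norm sqr_l2norm /sqsum (pair_bigA _ (fun a b => A a b ^+ 2)). Qed.

Lemma frobZ c A : frob (c *: A) = `|c| * frob A.
Proof. by rewrite !frob_l2norm -l2normZ; apply: eq_l2norm => t; rewrite mxE. Qed.

Lemma stnorm_ge0 X : 0 <= stnorm X.
Proof. exact: sqrtr_ge0. Qed.

(* Entry positions come first, so that [stnorm_le_entrywise] below compares,
   position by position, vectors of R^n. *)
Lemma stnorm_l2norm X :
  stnorm X = l2norm (fun t : 'I_p * 'I_q * 'I_n => X t.2 t.1.1 t.1.2).
Proof.
rewrite /stnorm /l2norm /sqsum -(pair_bigA _ (fun ab i => X i ab.1 ab.2 ^+ 2)) /=.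
rewrite -(pair_bigA _ (fun a b => \sum_i X i a b ^+ 2)) /=.
congr Num.sqrt; under eq_bigr do rewrite sqr_frob.
by rewrite exchange_big; apply: eq_bigr => a _; rewrite exchange_big.
Qed.

Lemma eq_stnorm X Y : X =1 Y -> stnorm X = stnorm Y.
Proof. by move=> XY; rewrite !stnorm_l2norm; apply: eq_l2norm => t; rewrite XY. Qed.

Lemma stnormD X Y : stnorm (fun i => X i + Y i) <= stnorm X + stnorm Y.
Proof.
rewrite !stnorm_l2norm (eq_l2norm (v := fun t => X t.2 t.1.1 t.1.2 + Y t.2 t.1.1 t.1.2)).
  exact: l2normD.
by move=> t; rewrite mxE.
Qed.

Lemma stnormZ c X : stnorm (fun i => c *: X i) = `|c| * stnorm X.
Proof. by rewrite !stnorm_l2norm -l2normZ; apply: eq_l2norm => t; rewrite mxE. Qed.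

Lemma stnormB X Y : stnorm (fun i => X i - Y i) <= stnorm X + stnorm Y.
Proof.
apply: le_trans (stnormD _ _) _.
by rewrite (eq_stnorm (fun i => esym (scaleN1r (Y i)))) stnormZ normrN1 mul1r.
Qed.

Lemma stnorm_le_entrywise c X Y : 0 <= c ->
  (forall a b, sqsum (fun i => X i a b) <= c ^+ 2 * sqsum (fun i => Y i a b)) ->
  stnorm X <= c * stnorm Y.
Proof.
move=> c0 XY; rewrite !stnorm_l2norm; apply: l2norm_le_sqsum => //.
rewrite /sqsum -(pair_bigA _ (fun ab i => X i ab.1 ab.2 ^+ 2)).
rewrite -(pair_bigA _ (fun ab i => Y i ab.1 ab.2 ^+ 2)) mulr_sumr /=.
by apply: ler_sum => ab _; exact: XY.
Qed.

End StackedNorm.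

Lemma stnorm_le_blockwise (R : realType) n p q p' q' c
    (X : 'I_n -> 'M[R]_(p, q)) (Y : 'I_n -> 'M[R]_(p', q')) :
  (forall i, frob (X i) <= c * frob (Y i)) -> stnorm X <= c * stnorm Y.
Proof. by apply: l2norm_le_pointwise => i; exact: frob_ge0. Qed.

Section OperatorNorm.
Variables (R : realType) (m p : nat) (A : 'M[R]_(m, p)).

Lemma frob_col (v : 'cV[R]_p) : frob v = l2norm (fun j => v j 0).
Proof. by rewrite /frob /l2norm /sqsum; under eq_bigr do rewrite big_ord1. Qed.

Lemma frob_mulmx_le (v : 'cV[R]_p) : frob (A *m v) <= frob A * frob v.
Proof.
apply: sqrtr_le; first by rewrite mulr_ge0 ?frob_ge0.
rewrite exprMn sqr_frob frob_col sqr_l2norm /sqsum mulr_suml.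
apply: ler_sum => i _; rewrite big_ord1 mxE.
exact: (cauchy_schwarz (fun j => A i j) (fun j => v j 0)).
Qed.

Let image_unit_ball :=
  [set frob (A *m v) | v in [set v : 'cV[R]_p | frob v <= 1]]%classic.

Lemma image_unit_ball_ub : ubound image_unit_ball (frob A).
Proof.
move=> _ [v /= v1 <-]; apply: le_trans (frob_mulmx_le v) _.
exact: ler_piMr (frob_ge0 A) v1.
Qed.

Lemma opnorm_ge0 : 0 <= opnorm A.
Proof.
apply: le_trans (frob_ge0 (A *m 0)) _.
apply: ub_le_sup; first by exists (frob A); exact: image_unit_ball_ub.
by exists 0; rewrite //= -(scale0r 0) frobZ normr0 mul0r.
Qed.

Lemma frob_mulmx_le_opnorm (v : 'cV[R]_p) : frob (A *m v) <= opnorm A * frob v.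
Proof.
have [v0|v_neq0] := eqVneq (frob v) 0.
  by have := frob_mulmx_le v; rewrite v0 !mulr0.
have v_gt0 : 0 < frob v by rewrite lt_def v_neq0 frob_ge0.
rewrite -ler_pdivrMr // mulrC -[(frob v)^-1]ger0_norm ?invr_ge0 ?frob_ge0 //.
rewrite -frobZ scalemxAr.
apply: ub_le_sup; first by exists (frob A); exact: image_unit_ball_ub.
exists ((frob v)^-1 *: v) => //=.
by rewrite frobZ ger0_norm ?invr_ge0 ?frob_ge0 // mulVf.
Qed.

End OperatorNorm.

Definition centered (R : realType) n p q (X : 'I_n -> 'M[R]_(p, q)) :
  'I_n -> 'M[R]_(p, q) := fun i => X i - avg X i.

Lemma mixE (R : realType) n p q (W : 'M[R]_n) (X : 'I_n -> 'M[R]_(p, q)) i a b :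
  mix W X i a b = \sum_j W i j * X j a b.
Proof. by rewrite summxE; apply: eq_bigr => j _; rewrite mxE. Qed.

Section Centering.
Variables (R : realType) (n : nat).

Lemma sum_sub_mean (V : lmodType R) (z : 'I_n -> V) :
  \sum_i (z i - n%:R^-1 *: \sum_j z j) = 0.
Proof.
case: n z => [|m] z; first by rewrite big_ord0.
by rewrite sumrB sumr_const card_ord -scaler_nat scalerA mulfV ?scale1r ?subrr ?pnatr_eq0.
Qed.

Lemma sqsum_sub_mean_le (z : 'I_n -> R) :
  sqsum (fun i => z i - n%:R^-1 * \sum_j z j) <= sqsum z.
Proof.
set m := n%:R^-1 * _.
have pythagoras :
    sqsum z = sqsum (fun i => z i - m) + (m * \sum_i (z i - m)) *+ 2 + m ^+ 2 *+ n.
  have -> : m ^+ 2 *+ n = \sum_(i < n) m ^+ 2 by rewrite sumr_const card_ord.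
  rewrite /sqsum mulr_sumr -sumrMnl -!big_split /=.
  by apply: eq_bigr => i _; ring.
rewrite pythagoras (sum_sub_mean (z : 'I_n -> R^o)) mulr0 mul0rn addr0 lerDl.
exact: mulrn_wge0 (sqr_ge0 _).
Qed.

Lemma sqsum_mix_meanfree (W : 'M[R]_n) (z : 'I_n -> R) : \sum_j z j = 0 ->
  sqsum (fun i => \sum_j W i j * z j)
    <= opnorm (W - n%:R^-1 *: const_mx 1) ^+ 2 * sqsum z.
Proof.
move=> z_meanfree; set M := W - _.
have Mz i : (M *m \col_j z j) i 0 = \sum_j W i j * z j.
  rewrite mxE (eq_bigr (fun j => W i j * z j - n%:R^-1 * z j)) => [|j _].
    by rewrite sumrB -mulr_sumr z_meanfree mulr0 subr0.
  by rewrite !mxE mulr1 mulrBl.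
rewrite -!sqr_l2norm -exprMn ler_pXn2r ?nnegrE ?mulr_ge0 ?l2norm_ge0 ?opnorm_ge0 //.
have := frob_mulmx_le_opnorm M (\col_j z j).
by rewrite !frob_col (eq_l2norm Mz) (eq_l2norm (fun j => mxE _ _ j 0)).
Qed.

Variables (p q : nat).
Implicit Types X : 'I_n -> 'M[R]_(p, q).

Lemma stnorm_centered_le X : stnorm (centered X) <= stnorm X.
Proof.
rewrite -[leRHS]mul1r; apply: stnorm_le_entrywise => // a b.
rewrite expr1n mul1r (eq_sqsum (v := fun i => X i a b - n%:R^-1 * \sum_j X j a b)).
  exact: sqsum_sub_mean_le.
by move=> i; rewrite !mxE summxE.
Qed.

Lemma stnorm_mix_meanfree (W : 'M[R]_n) X : \sum_i X i = 0 ->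
  stnorm (mix W X) <= opnorm (W - n%:R^-1 *: const_mx 1) * stnorm X.
Proof.
move=> X_meanfree; apply: stnorm_le_entrywise => [|a b]; first exact: opnorm_ge0.
rewrite (eq_sqsum (fun i => mixE W X i a b)); apply: sqsum_mix_meanfree.
by rewrite -summxE X_meanfree mxE.
Qed.

End Centering.

Section Mixing.
Variables (R : realType) (n : nat) (W : 'M[R]_n).
Hypotheses (W_ge0 : forall i j, 0 <= W i j) (W_sym : W^T = W)
  (W_row1 : forall i, \sum_j W i j = 1).

Lemma W_col1 j : \sum_i W i j = 1.
Proof. by rewrite -(W_row1 j); apply: eq_bigr => i _; rewrite -{1}W_sym mxE. Qed.

Lemma sqsum_mix_le (z : 'I_n -> R) : sqsum (fun i => \sum_j W i j * z j) <= sqsum z.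
Proof.
(* Jensen: Cauchy-Schwarz against the weights sqrt (W i j). *)
have row_le i : (\sum_j W i j * z j) ^+ 2 <= \sum_j W i j * z j ^+ 2.
  have := cauchy_schwarz (fun j => Num.sqrt (W i j)) (fun j => Num.sqrt (W i j) * z j).
  have -> : \sum_j Num.sqrt (W i j) * (Num.sqrt (W i j) * z j) = \sum_j W i j * z j.
    by apply: eq_bigr => j _; rewrite mulrA -expr2 sqr_sqrtr.
  have -> : sqsum (fun j => Num.sqrt (W i j)) = 1.
    by rewrite -(W_row1 i); apply: eq_bigr => j _; rewrite sqr_sqrtr.
  have -> : sqsum (fun j => Num.sqrt (W i j) * z j) = \sum_j W i j * z j ^+ 2.
    by apply: eq_bigr => j _; rewrite exprMn sqr_sqrtr.
  by rewrite mul1r.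
apply: le_trans (ler_sum _ (fun i _ => row_le i)) _.
rewrite exchange_big /=; under eq_bigr do rewrite -mulr_suml W_col1 mul1r.
exact: lexx.
Qed.

Section StackedMixing.
Variables (p q : nat).
Implicit Types X Y : 'I_n -> 'M[R]_(p, q).

Lemma mixB X Y i : mix W (fun j => X j - Y j) i = mix W X i - mix W Y i.
Proof. by rewrite /mix -sumrB; apply: eq_bigr => j _; rewrite scalerBr. Qed.

Lemma sum_mix X : \sum_i mix W X i = \sum_i X i.
Proof.
rewrite exchange_big /=; apply: eq_bigr => j _.
by rewrite -scaler_suml W_col1 scale1r.
Qed.

Lemma mix_centered X i : mix W (centered X) i = mix W X i - avg X i.
Proof. by rewrite mixB /mix -scaler_suml W_row1 scale1r. Qed.

Lemma stnorm_mix_le X : stnorm (mix W X) <= stnorm X.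
Proof.
rewrite -[leRHS]mul1r; apply: stnorm_le_entrywise => // a b.
by rewrite expr1n mul1r (eq_sqsum (fun i => mixE W X i a b)); exact: sqsum_mix_le.
Qed.

Variables (gamma : R) (H Hh D : 'I_n -> 'M[R]_(p, q)).

Let H' := fun j => H j - gamma *: (Hh j - mix W Hh j) + D j.

Lemma avg_gossip_step i : avg H' i = avg H i + avg D i.
Proof.
rewrite /avg -scalerDr /H' big_split sumrB -scaler_sumr sumrB sum_mix.
by rewrite subrr scaler0 subr0.
Qed.

Lemma centered_gossip_step i :
  centered H' i = (1 - gamma) *: centered H i + gamma *: mix W (centered H) i
    - gamma *: ((Hh i - H i) - mix W (fun j => Hh j - H j) i) + centered D i.
Proof.
rewrite {1}/centered avg_gossip_step mix_centered mixB /centered /H'.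
set a := avg H i; set b := avg D i; set m := mix W H i; set m' := mix W Hh i.
by apply/matrixP => r c; rewrite !mxE; ring.
Qed.

Lemma stnorm_centered_gossip_step : 0 <= gamma <= 1 ->
  stnorm (centered H') <=
    (1 - gamma * (1 - opnorm (W - n%:R^-1 *: const_mx 1))) * stnorm (centered H)
    + 2 * gamma * stnorm (fun j => Hh j - H j) + stnorm (centered D).
Proof.
move=> /andP[gamma_ge0 gamma_le1].
set sigma := opnorm _; set Z := fun j => Hh j - H j.
have mix_centered_le : stnorm (mix W (centered H)) <= sigma * stnorm (centered H).
  by apply: stnorm_mix_meanfree; exact: sum_sub_mean.
have Z_mix_le : stnorm (fun j => Z j - mix W Z j) <= 2 * stnorm Z.
  by apply: le_trans (stnormB _ _) _; rewrite mulr2n mulrDl mul1r lerD2l stnorm_mix_le.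
rewrite (eq_stnorm centered_gossip_step).
apply: le_trans (stnormD _ _) _; rewrite lerD2r.
apply: le_trans (stnormB _ _) _.
apply: le_trans (lerD (stnormD _ _) (lexx _)) _.
rewrite !stnormZ !ger0_norm ?subr_ge0 // -mulrA.
have := ler_wpM2l gamma_ge0 mix_centered_le; have := ler_wpM2l gamma_ge0 Z_mix_le.
lra.
Qed.

End StackedMixing.
End Mixing.

Lemma stnorm_compression_err (R : realType) n p q (Q : 'M[R]_(p, q) -> 'M[R]_(p, q))
    (delta : R) (E H G : 'I_n -> 'M[R]_(p, q)) :
  0 <= delta <= 1 -> (forall A, frob (Q A - A) <= (1 - delta) * frob A) ->
  stnorm (fun j => G j + Q (E j + H j - G j) - H j)
    <= 2 * stnorm E + (1 - delta) * stnorm (fun j => H j - G j).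
Proof.
move=> /andP[delta_ge0 delta_le1] Q_contr.
set A := fun j => E j + H j - G j.
have -> : (fun j => G j + Q (A j) - H j) = (fun j => E j + (Q (A j) - A j)).
  by apply: funext => j; apply/matrixP => r c; rewrite !mxE; ring.
have A_le : stnorm A <= stnorm E + stnorm (fun j => H j - G j).
  by rewrite (eq_stnorm (fun j => esym (addrA (E j) (H j) (- G j)))); exact: stnormD.
have QA_le : stnorm (fun j => Q (A j) - A j) <= (1 - delta) * stnorm A.
  exact: stnorm_le_blockwise.
have one_sub_delta_ge0 : 0 <= 1 - delta by rewrite subr_ge0.
have one_sub_delta_E : (1 - delta) * stnorm E <= stnorm E.
  by apply: ler_piMl; rewrite ?stnorm_ge0 ?gerBl.
apply: le_trans (stnormD _ _) _.
have := ler_wpM2l one_sub_delta_ge0 A_le.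
lra.
Qed.

Unset Implicit Arguments.
Theorem lemma8 (R : realType) (n d : nat)
  (W : 'M[R]_n) (e : rel 'I_n)
  (f : 'I_n -> 'rV[R]_d -> R) (L1 L2 : R)
  (Q : 'M[R]_d -> 'M[R]_d) (delta gamma : R)
  (x : nat -> 'I_n -> 'rV[R]_d)
  (E Ht H : nat -> 'I_n -> 'M[R]_d) :
  (* communication graph: undirected (symmetric, loopless) and connected *)
  (forall i j, e i j = e j i) -> (forall i, ~~ e i i) ->
  (forall i j, connect e i j) ->
  (* mixing matrix *)
  (forall i j, 0 <= W i j) -> W^T = W ->
  (forall i, \sum_(j < n) W i j = 1) ->
  (forall i j, W i j = 0 <-> (j != i /\ ~~ e i j)) ->
  (* local functions *)
  (forall i, isC2 (f i)) ->
  (forall i y z, frob (grad (f i) y - grad (f i) z) <= L1 * frob (y - z)) ->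
  (forall i y z, frob (hess (f i) y - hess (f i) z) <= L2 * frob (y - z)) ->
  (* compressor *)
  0 < delta -> delta <= 1 ->
  (forall A, frob (Q A - A) <= (1 - delta) * frob A) ->
  (* iteration *)
  0 < gamma ->
  (forall i, H 0%N i = hess (f i) (x 0%N i)) ->
  (forall k i, E k.+1 i = E k i + H k i - Ht k i - Q (E k i + H k i - Ht k i)) ->
  (forall k i, Ht k.+1 i = Ht k i + Q (H k i - Ht k i)) ->
  let Hhat := fun k i => Ht k i + Q (E k i + H k i - Ht k i) in
  (forall k i, H k.+1 i = H k i - gamma *: (Hhat k i - mix W (Hhat k) i)
                          + hess (f i) (x k.+1 i) - hess (f i) (x k i)) ->
  let sigma := opnorm (W - n%:R^-1 *: const_mx 1) in
  gamma < 1 ->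
  forall k : nat,
    stnorm (fun i => H k.+1 i - avg (H k.+1) i)
    <= (1 - gamma * (1 - sigma)) * stnorm (fun i => H k i - avg (H k) i)
       + 4 * gamma * stnorm (E k)
       + 2 * gamma * (1 - delta) * stnorm (fun i => H k i - Ht k i)
       + L2 * stnorm (fun i => x k.+1 i - x k i).
Proof.
move=> _ _ _ W_ge0 W_sym W_row1 _ _ _ hess_lip delta_gt0 delta_le1 Q_contr gamma_gt0
  _ _ _ Hhat H_step sigma gamma_lt1 k.
set D := fun i => hess (f i) (x k.+1 i) - hess (f i) (x k i).
have -> : H k.+1 = fun i => H k i - gamma *: (Hhat k i - mix W (Hhat k) i) + D i.
  by apply: funext => i; rewrite H_step -addrA.
have gamma_bounds : 0 <= gamma <= 1 by rewrite !ltW.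
have delta_bounds : 0 <= delta <= 1 by rewrite ltW.
have step :=
  stnorm_centered_gossip_step W_ge0 W_sym W_row1 (H k) (Hhat k) D gamma_bounds.
have D_le : stnorm (centered D) <= L2 * stnorm (fun i => x k.+1 i - x k i).
  apply: le_trans (stnorm_centered_le D) _.
  by apply: stnorm_le_blockwise => i; exact: hess_lip.
have Z_le : stnorm (fun j => Hhat k j - H k j)
    <= 2 * stnorm (E k) + (1 - delta) * stnorm (fun j => H k j - Ht k j).
  exact: stnorm_compression_err.
have two_gamma_ge0 : 0 <= 2 * gamma by rewrite mulr_ge0 ?ltW.
apply: le_trans step _; rewrite -/sigma.
have := ler_wpM2l two_gamma_ge0 Z_le.
lra.
Qed.
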